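(* Let $q\ge2$, $G\in\mathbb G^q$ and $S=\Psi(G)$. Let $v$ be a vertex of color $i\in\{1,\dots,q\}$ of $S$, and let $e,e'$ be the color-$i$ edges of $G$ corresponding to two corners of $v$. These two corners split the set of edges incident to $v$ into two (cyclic-interval) sets $V_a$ and $V_b$. Suppose that for one of these sets, say $V_a$, every edge $a\in V_a$, with white endpoint $w_a$, is a bridge of $S$ such that the connected component of $S\setminus a$ containing $w_a$ is a tree. Then there exists a path in $G$ containing both $e$ and $e'$ and no edge of color $0$.
   Context: Fix an integer $q\ge 2$. A $(q+1)$-edge-colored graph (colored graph) is a finite connected graph, multiple edges allowed and no loops, whose edges carry colors in $\{0,1,\dots,q\}$ such that every vertex is incident to exactly one edge of each color. It is rooted if one color-0 edge is distinguished and oriented; it is bipartite if its vertices can be colored black and white so that every edge joins a black and a white vertex, with the convention that the origin of the root edge is black. $\mathbb G^q$ denotes the set of rooted bipartite colored graphs. Constellations: given $G\in\mathbb G^q$, its constellation $S=\Psi(G)$ is obtained as follows: orient every edge from its black to its white endpoint; contract every color-0 edge into a single vertex, called a white vertex of $S$. For each $i\in\{1,\dots,q\}$ the color-$i$ edges now form directed cycles; for each such cycle, passing through white vertices $w_1,\dots,w_p$ in this cyclic order, add a new vertex of color $i$ joined by one color-$i$ edge to each $w_k$, equip the new vertex with the cyclic order $(w_1,\dots,w_p)$ of its incident edges, and delete the original color-$i$ edges of the cycle. The corner of this color-$i$ vertex between its edges to $w_k$ and $w_{k+1}$ (indices mod $p$) is said to correspond to the original color-$i$ edge of $G$ directed from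 (the black endpoint of the color-0 edge) $w_k$ to (the white endpoint of the color-0 edge) $w_{k+1}$. *)

From mathcomp Require Import all_boot.
Set Implicit Arguments. Unset Strict Implicit. Unset Printing Implicit Defensive.

(* Since every vertex is incident
   to exactly one edge of each color and there are no loops, the color-i edges
   form a perfect matching, encoded by a fixed-point-free involution [sigma i];
   the color-i edge at x is {x, sigma i x}.  Multiple edges (of different
   colors) between two vertices are allowed.  The root is the color-0 edge
   {root, sigma ord0 root}, oriented from [root], which is black. *)
Record cgraph (q : nat) := CGraph {
  vert : finType;
  sigma : 'I_q.+1 -> vert -> vert;
  sigma_invol : forall i, involutive (sigma i);
  sigma_noloop : forall i x, sigma i x != x;
  cg_connected : forall x y,
      connect (fun u v => [exists i, sigma i u == v]) x y;
  black : vert -> bool;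
  black_bip : forall i x, black (sigma i x) = ~~ black x;
  root : vert;
  root_black : black root
}.

Arguments sigma {q} c i x.
Arguments black {q} c x.

Section Constellation.
Variables (q : nat) (G : cgraph q).
Local Notation V := (vert G).
Local Notation sgm := (@sigma q G).

(* A color-i edge of G is identified by (its color and) its black endpoint.
   The white vertex of S coming from the color-0 edge {b, sgm 0 b} is identified
   by the black endpoint b.  The color-i edge from b (black) goes to the white
   endpoint of the color-0 edge of [cpi i b]; the color-i vertices of S are the
   cycles of [cpi i] on black vertices. *)
Definition cpi (i : 'I_q.+1) : V -> V := fun x => sgm ord0 (sgm i x).

Definition orbit_set (i : 'I_q.+1) (b : V) : {set V} :=
  [set y | fconnect (cpi i) b y].

(* Vertices of S: inl b = white vertex (color-0 edge with black endpoint b);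
   inr (i, O) = color-i vertex whose cycle of white vertices is O. *)
Definition SV := (V + ('I_q.+1 * {set V}))%type.

Definition Sarc (x y : SV) : bool :=
  match x, y with
  | inl b, inr (i, Os) => [&& black G b, i != ord0 & Os == orbit_set i b]
  | _, _ => false
  end.

Definition Sadj : rel SV := fun x y => Sarc x y || Sarc y x.

Definition Sdel (u v : SV) : rel SV :=
  fun x y => Sadj x y && ~~ (((x == u) && (y == v)) || ((x == v) && (y == u))).

Definition bridge_tree_side (w : V) (v : SV) : Prop :=
  Sadj (inl w) v /\
  ~~ connect (Sdel (inl w) v) (inl w) v /\
  (forall c : seq SV, 3 <= size c -> uniq c -> cycle (Sdel (inl w) v) c ->
     all (connect (Sdel (inl w) v) (inl w)) c -> False).

(* the white endpoints of the edges of the color-i vertex containing b1 that lie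
   strictly between the corner of b1 and the corner of b2 (in the cyclic order):
   cpi b1, cpi^2 b1, ..., b2.  The corner of b is the one between the edges to
   b and to cpi b. *)
Definition corner_arc (i : 'I_q.+1) (b1 b2 : V) : pred V :=
  fun w => [exists k : 'I_(findex (cpi i) b1 b2).+1,
              (0 < k) && (iter k (cpi i) b1 == w)].

(* walks in G: a start vertex and a sequence of colors *)
Fixpoint wverts (x : V) (cs : seq 'I_q.+1) : seq V :=
  match cs with [::] => [:: x] | c :: cs' => x :: wverts (sgm c x) cs' end.
Fixpoint wedges (x : V) (cs : seq 'I_q.+1) : seq (V * 'I_q.+1) :=
  match cs with [::] => [::] | c :: cs' => (x, c) :: wedges (sgm c x) cs' end.

Definition uses_edge (x : V) (cs : seq 'I_q.+1) (i : 'I_q.+1) (b : V) : bool :=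
  has (fun p : V * 'I_q.+1 => (p.2 == i) && ((p.1 == b) || (sgm i p.1 == b)))
      (wedges x cs).

Definition path_no0 (x : V) (cs : seq 'I_q.+1) : bool :=
  uniq (wverts x cs) && all (fun c => c != ord0) cs.

End Constellation.

Arguments cpi {q} G i x.
Arguments orbit_set {q} G i b.
Arguments Sarc {q} G x y.
Arguments Sadj {q} G x y.
Arguments Sdel {q} G u v x y.
Arguments bridge_tree_side {q} G w v.
Arguments corner_arc {q} G i b1 b2 w.
Arguments wverts {q} G x cs.
Arguments wedges {q} G x cs.
Arguments uses_edge {q} G x cs i b.
Arguments path_no0 {q} G x cs.

From mathcomp Require Import all_boot.
Set Implicit Arguments. Unset Strict Implicit. Unset Printing Implicit Defensive.

(* Let w_1, ..., w_m = b2 be the (black ends of the) white vertices of S met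
   along the arc, and w_0 = b1.  Each bridge {w_k, v} cuts off a side of S; the
   vertices of G whose white vertex lies on that side are closed under all
   edges of nonzero color except the color-i edge at the color-0 edge w_k,
   which crosses the bridge.  Walking along the alternating (j, i)-cycle
   through w_k, for a third color j (this needs q >= 2), shows that the two
   ends of the color-0 edge w_k are joined inside its side by edges of nonzero
   color.  Sides of distinct bridges are disjoint, so these paths, linked by
   the color-i edges from w_(k-1) to the color-0 edge w_k and finally the one
   leaving b2, form a path of G. *)

Lemma exists_other_color q (i : 'I_q.+1) :
  2 <= q -> exists2 j : 'I_q.+1, j != ord0 & j != i.
Proof.
move=> hq; have hq1 : 1 < q.+1 by apply: leq_trans hq _.
have ne_ord (a b : nat) : a < q.+1 -> b < q.+1 -> a != b -> (inord a : 'I_q.+1) != inord b.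
  by move=> ha hb; apply: contra => /eqP/(congr1 val); rewrite /= !inordK // => ->.
have h1 : (inord 1 : 'I_q.+1) != ord0.
  by apply/eqP => /(congr1 val); rewrite /= inordK.
have h2 : (inord 2 : 'I_q.+1) != ord0.
  by apply/eqP => /(congr1 val); rewrite /= inordK.
case: (eqVneq i (inord 1)) => [->|hi1]; last by exists (inord 1); rewrite // eq_sym.
by exists (inord 2); rewrite // ne_ord.
Qed.

Section ColoredGraph.
Variables (q : nat) (G : cgraph q).
Local Notation V := (vert G).
Local Notation sg := (sigma G).
Local Notation o := (@ord0 q).

Lemma sigma_inj c : injective (sg c).
Proof. exact: inv_inj (sigma_invol c). Qed.

Lemma sigma_eq_sym c x y : (sg c x == y) = (x == sg c y).
Proof. by rewrite -[x == _](inj_eq (@sigma_inj c)) sigma_invol. Qed.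

Lemma cpi_inj c : injective (cpi G c).
Proof. by move=> x y /sigma_inj /sigma_inj. Qed.

Lemma black_cpi c x : black G (cpi G c x) = black G x.
Proof. by rewrite /cpi !black_bip negbK. Qed.

Lemma black_iter_cpi c n x : black G (iter n (cpi G c) x) = black G x.
Proof. by elim: n => //= n IH; rewrite black_cpi. Qed.

Lemma orbit_set_cpi c x : orbit_set G c (cpi G c x) = orbit_set G c x.
Proof.
by apply/setP=> y; rewrite /orbit_set !inE -(same_fconnect1 (@cpi_inj c)).
Qed.

Lemma orbit_set_iter_cpi c n x : orbit_set G c (iter n (cpi G c) x) = orbit_set G c x.
Proof. by elim: n => //= n IH; rewrite orbit_set_cpi. Qed.

Lemma orbit_set_fconnect c x y :
  fconnect (cpi G c) x y -> orbit_set G c y = orbit_set G c x.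
Proof. by move=> h; rewrite -(iter_findex h) orbit_set_iter_cpi. Qed.

(* The white vertex of S containing [y] is [inl (zero_black y)]. *)
Definition zero_black (y : V) : V := if black G y then y else sg o y.

Lemma black_zero_black y : black G (zero_black y).
Proof. by rewrite /zero_black; case: ifP => // hy; rewrite black_bip hy. Qed.

Lemma orbit_set_zero_black_sigma c y :
  orbit_set G c (zero_black (sg c y)) = orbit_set G c (zero_black y).
Proof.
rewrite /zero_black black_bip; case: (black G y) => /=; first exact: orbit_set_cpi.
by rewrite -(orbit_set_cpi c (sg c y)) /cpi sigma_invol.
Qed.

Lemma Sdel_sym (u w : SV G) : symmetric (Sdel G u w).
Proof.
move=> x y; rewrite /Sdel /Sadj (orbC (Sarc G y x)).
by congr (_ && ~~ _); case: (x == u); case: (y == w); case: (x == w); case: (y == u).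
Qed.

Lemma eq_inl (a b : V) : (inl a == inl b :> SV G) = (a == b).
Proof. by apply/eqP/eqP => [[]|->]. Qed.

Definition wend (x : V) (cs : seq 'I_q.+1) : V := foldl (fun y c => sg c y) x cs.

Lemma wend_cat_cons x cs1 c cs2 :
  wend x (cs1 ++ c :: cs2) = wend (sg c (wend x cs1)) cs2.
Proof. by rewrite /wend foldl_cat. Qed.

Lemma wverts_cat_cons x cs1 c cs2 :
  wverts G x (cs1 ++ c :: cs2) = wverts G x cs1 ++ wverts G (sg c (wend x cs1)) cs2.
Proof. by elim: cs1 x => [|d cs IH] x /=; rewrite ?IH. Qed.

Lemma uses_edge_cat x cs1 cs2 c b :
  uses_edge G x (cs1 ++ cs2) c b = uses_edge G x cs1 c b || uses_edge G (wend x cs1) cs2 c b.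
Proof.
rewrite /uses_edge -has_cat; congr has.
by elim: cs1 x => [|d cs IH] x //=; rewrite IH.
Qed.

Lemma path_to_walk (e : rel V) x p :
  (forall y z, e y z -> exists2 c, c != o & sg c y = z) -> path e x p ->
  exists cs, [/\ wverts G x cs = x :: p, all (fun c => c != o) cs & wend x cs = last x p].
Proof.
move=> he; elim: p x => [|y p IH] x /=; first by exists [::].
case/andP=> /he[c c0 <-] /IH[cs [h1 h2 h3]]; exists (c :: cs) => /=.
by rewrite h1 c0 h3.
Qed.

End ColoredGraph.

Section BridgeSide.
Variables (q : nat) (G : cgraph q) (i : 'I_q.+1) (O : {set vert G}).
Hypothesis hi : i != ord0.
Local Notation V := (vert G).
Local Notation sg := (sigma G).
Local Notation o := (@ord0 q).
Let v : SV G := inr (i, O).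
Local Notation D w := (Sdel G (inl w) v).

Definition is_bridge (w : V) :=
  [/\ black G w, orbit_set G i w = O & ~~ connect (D w) (inl w) v].

Definition side (w : V) : pred V :=
  fun y => connect (D w) (inl w) (inl (zero_black y)).

Lemma bridge_tree_side_is_bridge w : bridge_tree_side G w v -> is_bridge w.
Proof.
by case; rewrite /Sadj /= orbF => /and3P[hw _ /eqP hO] [nc _]; split.
Qed.

Lemma side_self w : is_bridge w -> side w w.
Proof. by case=> hw _ _; rewrite /side /zero_black hw connect0. Qed.

Lemma Sdel_color_edge w b c : black G b -> c != o -> ~~ ((c == i) && (b == w)) ->
  D w (inl b) (inr (c, orbit_set G c b)).
Proof.
move=> hb hc hcb; rewrite /Sdel /Sadj /= hb hc eqxx /= eq_inl.
case: (eqVneq c i) hcb => [->|ci _] /=; first by move/negbTE->.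
by rewrite orbF; apply/nandP; right; apply/eqP => -[ci' _]; rewrite ci' eqxx in ci.
Qed.

Lemma bridge_reach_black w b : is_bridge w -> connect (D w) (inl w) (inl b) ->
  black G b -> orbit_set G i b = O -> b = w.
Proof.
case=> _ _ /negP nc hwb hb hbO; apply/eqP/negPn/negP => bw; apply: nc.
apply: connect_trans hwb (connect1 _).
by rewrite /Sdel /Sadj /= hb hi hbO eqxx /= eq_inl (negbTE bw).
Qed.

(* The color-c edge {x, sg c x} of G becomes the two edges of S joining the
   white vertices of x and of sg c x to a common color-c vertex. *)
Lemma side_sigma w x c : is_bridge w -> side w x -> c != o ->
  ~~ ((c == i) && (zero_black x == w)) -> side w (sg c x).
Proof.
move=> Bw wx hc hcx; set b := zero_black x; set b' := zero_black (sg c x).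
have hb : black G b := black_zero_black x.
have hb' : black G b' := black_zero_black (sg c x).
have hO : orbit_set G c b' = orbit_set G c b := orbit_set_zero_black_sigma c x.
have hcb' : ~~ ((c == i) && (b' == w)).
  apply/negP => /andP[/eqP ci /eqP b'w]; move/negP: hcx; apply; rewrite ci eqxx /=.
  apply/eqP/(bridge_reach_black Bw wx hb); case: Bw => _ <- _.
  by rewrite -ci -hO b'w.
apply: connect_trans wx _; apply: connect_trans (connect1 (Sdel_color_edge hb hc hcx)) _.
by apply: connect1; rewrite Sdel_sym -hO; apply: Sdel_color_edge.
Qed.

Lemma sides_disjoint w w' y : is_bridge w -> is_bridge w' ->
  side w y -> side w' y -> w' = w.
Proof.
move=> Bw Bw' wy w'y; have [hw' hw'O nc'] := Bw'.
have Dsub : {in connect (D w') (inl w') &, subrel (D w') (D w)}.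
  move=> x z x' z'; rewrite /Sdel => /andP[-> _] /=.
  have ne_v a : connect (D w') (inl w') a -> (a == v) = false.
    by move=> ha; apply: contraNF nc' => /eqP av; rewrite av in ha.
  by rewrite (ne_v _ x') (ne_v _ z') !andbF.
have w'y_in_D : connect (D w) (inl w') (inl (zero_black y)).
  case/connectP: w'y => p pp lp; apply/connectP; exists p => //.
  apply: (sub_in_path Dsub _ pp); apply/allP => a; exact: path_connect pp a.
apply: (bridge_reach_black Bw) hw' hw'O.
by apply: connect_trans wy _; rewrite (sym_connect_sym (@Sdel_sym _ G _ _)).
Qed.

Definition side_rel (w : V) : rel V := fun x y =>
  [&& side w x, side w y & [exists c, (c != o) && (sg c x == y)]].

Lemma side_rel_sym w : symmetric (side_rel w).
Proof.
move=> x y; rewrite /side_rel andbCA; congr [&& _, _ & _].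
by apply/existsP/existsP => -[c /andP[h1 h2]]; exists c; rewrite h1 sigma_eq_sym eq_sym.
Qed.

Lemma connect_side_rel w x y : side w x -> connect (side_rel w) x y -> side w y.
Proof.
move=> wx /connectP[p pp ->]; elim: p x wx pp => //= z p IH x _.
by case/andP=> /and3P[_ wz _] /IH; apply.
Qed.

Lemma connect_side_rel_sigma0 w : 2 <= q -> is_bridge w -> cpi G i w != w ->
  connect (side_rel w) w (sg o w).
Proof.
move=> hq Bw cw; have hw : black G w by case: Bw.
have [j j0 ji] := exists_other_color i hq.
set reach := connect (side_rel w) w.
have reach_side y : reach y -> side w y := connect_side_rel (side_self Bw).
have reach_sigma y c : reach y -> c != o ->
    ~~ ((c == i) && (zero_black y == w)) -> reach (sg c y).
  move=> ry hc hcy; apply/(connect_trans ry)/connect1.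
  rewrite /side_rel reach_side // (side_sigma Bw (reach_side _ ry) hc hcy) /=.
  by apply/existsP; exists c; rewrite hc eqxx.
apply: contraT => nr.
(* Unless it meets sg o w, the alternating (j, i)-cycle through w stays on the
   side of w; but it returns to w through sg i w, whose white vertex is another
   neighbour of v. *)
pose tau y := sg i (sg j y).
have reach_tau y : black G y -> reach y -> reach (tau y).
  move=> hy ry; have rj : reach (sg j y) by apply: reach_sigma; rewrite // (negbTE ji).
  apply: (reach_sigma _ _ rj hi); rewrite eqxx /= /zero_black black_bip hy /=.
  by apply: contra nr => /eqP e; rewrite -e sigma_invol.
have black_tau k : black G (iter k tau w).
  by elim: k => //= k IH; rewrite /tau !black_bip negbK.
have reach_iter k : reach (iter k tau w).
  by elim: k => [|k IH]; [exact: connect0 | apply: reach_tau (black_tau k) IH].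
have tau_inj : injective tau by move=> x y /sigma_inj /sigma_inj.
have e : sg j (iter (order tau w).-1 tau w) = sg i w.
  apply: (@sigma_inj _ G i); rewrite sigma_invol.
  by rewrite -[LHS]/(tau _) -iterS prednK ?order_gt0 // iter_order.
have : side w (sg i w).
  by rewrite -e; apply/reach_side/reach_sigma; rewrite ?(negbTE ji).
rewrite /side /zero_black black_bip hw /= => /(bridge_reach_black Bw).
by rewrite black_cpi orbit_set_cpi; case: Bw => _ -> _ /(_ hw erefl) /eqP; rewrite (negbTE cw).
Qed.

Lemma side_walk w : 2 <= q -> is_bridge w -> cpi G i w != w ->
  exists cs, [/\ uniq (wverts G (sg o w) cs), all (fun c => c != o) cs,
     wend (sg o w) cs = w & all (side w) (wverts G (sg o w) cs)].
Proof.
move=> hq Bw cw.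
have : connect (side_rel w) (sg o w) w.
  by rewrite (sym_connect_sym (@side_rel_sym w)) connect_side_rel_sigma0.
case/connectP=> p pp lp; move: lp; case: (shortenP pp) => p' pp' up' _ lp'.
have [cs [hv c0 he]] : exists cs, [/\ wverts G (sg o w) cs = sg o w :: p',
    all (fun c => c != o) cs & wend (sg o w) cs = last (sg o w) p'].
  apply: path_to_walk pp' => y z /and3P[_ _ /existsP[c /andP[c0 /eqP <-]]].
  by exists c.
exists cs; rewrite hv he up' -lp'; split => //; apply/allP => y /(path_connect pp').
apply: connect_side_rel.
have hw : black G w by case: Bw.
by rewrite /side /zero_black black_bip hw /= sigma_invol connect0.
Qed.

End BridgeSide.

Section CornerArc.
Variables (q : nat) (G : cgraph q) (i : 'I_q.+1) (b1 b2 : vert G).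
Hypotheses (hq : 2 <= q) (hi : i != ord0) (hb1 : black G b1)
  (hsame : fconnect (cpi G i) b1 b2) (hdist : b1 != b2).
Local Notation sg := (sigma G).
Local Notation o := (@ord0 q).
Local Notation f := (cpi G i).
Local Notation O := (orbit_set G i b1).
Local Notation m := (findex f b1 b2).
Local Notation wk k := (iter k f b1).
Local Notation side := (side i O).
Hypothesis harc : forall w, corner_arc G i b1 b2 w -> bridge_tree_side G w (inr (i, O)).

Lemma m_lt_order : m < order f b1.
Proof. exact: findex_max hsame. Qed.

Lemma wk_m : wk m = b2.
Proof. exact: iter_findex hsame. Qed.

Lemma wk_inj k l : k < order f b1 -> l < order f b1 -> wk k = wk l -> k = l.
Proof. by move=> hk hl e; rewrite -(findex_iter hk) -(findex_iter hl) e. Qed.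

Lemma wk_neq k l : k <= m -> l <= m -> k != l -> wk k != wk l.
Proof.
move=> km lm; apply: contra => /eqP /wk_inj -> //; exact: leq_ltn_trans m_lt_order.
Qed.

Lemma arc_is_bridge k : 0 < k <= m -> is_bridge i O (wk k).
Proof.
move=> /andP[k0 km]; apply/bridge_tree_side_is_bridge/harc.
by apply/existsP; exists (Ordinal (km : k < m.+1)); rewrite /= k0 eqxx.
Qed.

Lemma cpi_wk_neq k : f (wk k) != wk k.
Proof.
apply/eqP => e; move/eqP: hdist; apply.
have fixed y : fconnect f (wk k) y -> y = wk k.
  by move/iter_findex <-; exact: iter_fix.
have wk_b1 : fconnect f (wk k) b1.
  by rewrite (fconnect_sym (@cpi_inj _ G i)) fconnect_iter.
by rewrite (fixed _ wk_b1) (fixed _ (connect_trans wk_b1 hsame)).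
Qed.

Lemma b1_notin_side k : 0 < k <= m -> ~~ side (wk k) b1.
Proof.
move=> hk; apply/negP; rewrite /side /zero_black hb1.
move/(bridge_reach_black hi (arc_is_bridge hk)) => /(_ hb1 erefl) /eqP.
by case/andP: hk => k0 km; apply/negP/(wk_neq (leq0n m) km); rewrite eq_sym -lt0n.
Qed.

Lemma sigma_b2_notin_side k : 0 < k <= m -> ~~ side (wk k) (sg i b2).
Proof.
move=> hk; apply/negP; rewrite /side /zero_black black_bip -wk_m black_iter_cpi hb1 /=.
move/(bridge_reach_black hi (arc_is_bridge hk)).
rewrite black_cpi black_iter_cpi orbit_set_cpi orbit_set_iter_cpi => /(_ hb1 erefl).
case/andP: hk => k0 km; have ne : m != k.-1.
  by apply/eqP => e; move: km; rewrite -(prednK k0) -e ltnn.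
rewrite -(prednK k0) => /(@cpi_inj _ G i) /eqP.
by rewrite (negbTE (wk_neq (leqnn m) (leq_trans (leq_pred k) km) ne)).
Qed.

Lemma arc_side_walk k : k < m -> exists cs,
  [/\ uniq (wverts G (sg i (wk k)) cs), all (fun c => c != o) cs,
      wend (sg i (wk k)) cs = wk k.+1 & all (side (wk k.+1)) (wverts G (sg i (wk k)) cs)].
Proof.
move=> km; have -> : sg i (wk k) = sg o (wk k.+1) by rewrite /= /cpi sigma_invol.
exact: (side_walk hi hq (arc_is_bridge (k := k.+1) km) (cpi_wk_neq k.+1)).
Qed.

Definition arc_covered n (y : vert G) :=
  (y == b1) || has (fun l => side (wk l) y) (iota 1 n).

Lemma arc_walk_extend n cs : n < m -> uniq (wverts G b1 cs) -> wend b1 cs = wk n ->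
  all (arc_covered n) (wverts G b1 cs) -> exists L,
  [/\ uniq (wverts G b1 (cs ++ i :: L)), all (fun c => c != o) L,
      wend b1 (cs ++ i :: L) = wk n.+1 & all (arc_covered n.+1) (wverts G b1 (cs ++ i :: L))].
Proof.
move=> nm ucs ecs covcs; have [L [uL nL eL sL]] := arc_side_walk nm.
have hn : 0 < n.+1 <= m by [].
exists L; rewrite wverts_cat_cons wend_cat_cons ecs all_cat cat_uniq ucs uL andbT.
split => //.
- apply/hasPn => y /(allP sL) ny; apply/negP => /(allP covcs) /orP[/eqP yb1|].
    by move: ny; rewrite yb1; apply/negP/b1_notin_side.
  case/hasP=> l; rewrite mem_iota add1n ltnS => /andP[l0 ln] ly.
  have lm : l <= m := leq_trans ln (ltnW nm).
  have hl : 0 < l <= m by rewrite l0 lm.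
  have := sides_disjoint hi (arc_is_bridge hn) (arc_is_bridge hl) ny ly.
  by apply/eqP/(wk_neq lm nm); rewrite neq_ltn ltnS ln.
- apply/andP; split.
    apply: sub_all covcs => y; rewrite /arc_covered => /orP[->//|/hasP[l]].
    rewrite mem_iota => /andP[l0 ln] ly.
    by apply/orP; right; apply/hasP; exists l; rewrite // mem_iota l0 ltnW.
  apply: sub_all sL => y ny; apply/orP; right; apply/hasP; exists n.+1 => //.
  by rewrite mem_iota add1n leqnn.
Qed.

Lemma arc_walk n : n < m -> exists cs,
  [/\ uniq (wverts G b1 cs), all (fun c => c != o) cs, uses_edge G b1 cs i b1,
      wend b1 cs = wk n.+1 & all (arc_covered n.+1) (wverts G b1 cs)].
Proof.
elim: n => [|n IH] nm.
  have covb1 : all (arc_covered 0) (wverts G b1 [::]) by rewrite /= /arc_covered eqxx.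
  have [L [u nL e c]] := arc_walk_extend (cs := [::]) nm isT erefl covb1.
  by exists (i :: L); split; rewrite //= ?hi // /uses_edge /= !eqxx.
have [cs [u n0 ue e c]] := IH (ltnW nm).
have [L [u' nL e' c']] := arc_walk_extend nm u e c.
by exists (cs ++ i :: L); rewrite all_cat n0 /= hi nL uses_edge_cat ue.
Qed.

Lemma sigma_b2_not_covered : ~~ arc_covered m (sg i b2).
Proof.
have hb2 : black G b2 by rewrite -wk_m black_iter_cpi.
rewrite /arc_covered negb_or; apply/andP; split.
  by apply: contraTneq hb1 => <-; rewrite black_bip hb2.
apply/hasPn => l; rewrite mem_iota add1n ltnS => hl.
exact: sigma_b2_notin_side.
Qed.

Lemma corner_walk :
  exists x cs, [&& path_no0 G x cs, uses_edge G x cs i b1 & uses_edge G x cs i b2].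
Proof.
have m0 : 0 < m by rewrite lt0n; apply: contraNneq hdist => m0; rewrite -wk_m m0.
have [cs [u n0 ue e c]] := arc_walk (n := m.-1) (etrans (ltn_predL m) m0).
rewrite prednK // wk_m in e c.
exists b1, (cs ++ [:: i]).
rewrite /path_no0 wverts_cat_cons cat_uniq u all_cat n0 /= hi !uses_edge_cat ue e.
rewrite /uses_edge /= !eqxx !orbT !andbT orbF.
by apply: contra sigma_b2_not_covered => /(allP c).
Qed.

End CornerArc.

Theorem mainTheorem6 (q : nat) (hq : 2 <= q) (G : cgraph q)
    (i : 'I_q.+1) (hi : i != ord0) (b1 b2 : vert G)
    (hb1 : black G b1) (hb2 : black G b2)
    (hsame : fconnect (cpi G i) b1 b2) (hdist : b1 != b2) :
  let v : SV G := inr (i, orbit_set G i b1) in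
  ((forall w, corner_arc G i b1 b2 w -> bridge_tree_side G w v) \/
   (forall w, corner_arc G i b2 b1 w -> bridge_tree_side G w v)) ->
  exists (x : vert G) (cs : seq 'I_q.+1),
    [&& path_no0 G x cs, uses_edge G x cs i b1 & uses_edge G x cs i b2].
Proof.
move=> v [H|H]; first exact: corner_walk hq hi hb1 hsame hdist H.
have hs : fconnect (cpi G i) b2 b1 by rewrite (fconnect_sym (@cpi_inj _ G i)).
have hO : orbit_set G i b2 = orbit_set G i b1 := orbit_set_fconnect hsame.
have hd : b2 != b1 by rewrite eq_sym.
rewrite /v -hO in H.
have [x [cs /and3P[p u2 u1]]] := corner_walk hq hi hb2 hs hd H.
by exists x, cs; rewrite p u1 u2.
Qed.
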